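(* Let $P$ be a program and $G$ a goal. Suppose every infinite SLD derivation of $G$ in $P$ (under arbitrary selection of atoms) is pruned by $EVR_L$. Then there is a finite bound $l$ such that every resolvent $R$ occurring in any SLD derivation of $G$ in $P$ satisfies $\#R\le l$.
   Context: Goals are finite lists of atoms; $\#R$ is the number of atoms of $R$; $=_L$ denotes equality of goals as lists. A clause is $h\leftarrow B$; a program is a finite set of clauses. If $G=a_1,\dots,a_k$, $c=(h\leftarrow B)$, $\xi$ a renaming and $\theta$ an idempotent relevant mgu of $h\xi$ and some $a_i$, then $(a_1,\dots,a_{i-1},B\xi,a_{i+1},\dots,a_k)\theta$ is a resolvent. An SLD derivation of $G_0$ in $P$ is a finite or infinite sequence $G_0\xrightarrow{c_0\xi_0,\theta_0}G_1\xrightarrow{c_1\xi_1,\theta_1}\cdots$ of such steps with $c_j\in P$ and $var(c_j\xi_j)\cap(var(G_0)\cup var(c_0\xi_0)\cup\dots\cup var(c_{j-1}\xi_{j-1}))=\emptyset$; the selected atom at each step is arbitrary. $EVR_L$ (Equality Variant of Resultant as Lists) check: a derivation $G_0\xrightarrow{\theta_0}G_1\xrightarrow{\theta_1}\cdots$ is pruned by $EVR_L$ if there exist indices $0\le i<j$ and a renaming $\tau$ with $G_0\theta_0\cdots\theta_{j-1}=G_0\theta_0\cdots\theta_{i-1}\tau$ and $G_j=_L G_i\tau$. *)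

From Stdlib Require Import List Arith.
Import ListNotations.
Set Implicit Arguments.

Section Syntax.
Variables (Fsym Psym : Type).

Inductive term : Type :=
| Var : nat -> term
| Fn : Fsym -> list term -> term.

Record atom : Type := Atom { pred : Psym; args : list term }.

Definition goal := list atom.

Record clause : Type := Clause { head : atom; body : list atom }.

Definition program := list clause.

(* Substitutions: maps from variables to terms (domain = {x | s x <> Var x}). *)
Definition subst := nat -> term.

Fixpoint tsubst (s : subst) (t : term) : term :=
  match t with
  | Var x => s x
  | Fn f ts => Fn f (map (tsubst s) ts)
  end.

Definition asubst (s : subst) (a : atom) : atom :=
  Atom (pred a) (map (tsubst s) (args a)).

Definition gsubst (s : subst) (g : goal) : goal := map (asubst s) g.

Definition csubst (s : subst) (c : clause) : clause :=
  Clause (asubst s (head c)) (gsubst s (body c)).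

Fixpoint tvars (t : term) : list nat :=
  match t with
  | Var x => [x]
  | Fn _ ts => flat_map tvars ts
  end.

Definition avars (a : atom) : list nat := flat_map tvars (args a).
Definition gvars (g : goal) : list nat := flat_map avars g.
Definition cvars (c : clause) : list nat := avars (head c) ++ gvars (body c).

Definition renaming (s : subst) : Prop :=
  exists f : nat -> nat,
    (forall x, s x = Var (f x)) /\
    (forall x y, f x = f y -> x = y) /\
    (forall y, exists x, f x = y) /\
    (exists n, forall x, n <= x -> f x = x).

Definition unifier (s : subst) (a1 a2 : atom) : Prop := asubst s a1 = asubst s a2.

Definition mgu (th : subst) (a1 a2 : atom) : Prop :=
  unifier th a1 a2 /\
  forall s, unifier s a1 a2 -> exists eta, forall x, s x = tsubst eta (th x).

Definition idempotent (th : subst) : Prop := forall x, tsubst th (th x) = th x.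

Definition relevant (th : subst) (a1 a2 : atom) : Prop :=
  forall x, th x <> Var x ->
    In x (avars a1 ++ avars a2) /\
    (forall y, In y (tvars (th x)) -> In y (avars a1 ++ avars a2)).

Definition sld_step (P : program) (G : goal) (c : clause) (xi th : subst) (G' : goal) : Prop :=
  In c P /\ renaming xi /\
  exists i a,
    nth_error G i = Some a /\
    idempotent th /\ relevant th (asubst xi (head c)) a /\ mgu th (asubst xi (head c)) a /\
    G' = gsubst th (firstn i G ++ gsubst xi (body c) ++ skipn (S i) G).

(* length of a derivation: [Some n] = finite with n steps (goals G_0..G_n),
   [None] = infinite. *)
Definition step_in (len : option nat) (j : nat) : Prop :=
  match len with None => True | Some n => j < n end.

Definition goal_in (len : option nat) (j : nat) : Prop :=
  match len with None => True | Some n => j <= n end.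

(* SLD derivation of G0 in P: goals g j, clauses c j, renamings xi j, mgus th j,
   with the standardization-apart condition on the renamed clauses. *)
Definition sld_derivation (P : program) (G0 : goal) (len : option nat)
  (g : nat -> goal) (c : nat -> clause) (xi th : nat -> subst) : Prop :=
  g 0 = G0 /\
  forall j, step_in len j ->
    sld_step P (g j) (c j) (xi j) (th j) (g (S j)) /\
    (forall x, In x (cvars (csubst (xi j) (c j))) ->
       ~ In x (gvars G0) /\
       forall k, k < j -> ~ In x (cvars (csubst (xi k) (c k)))).

Fixpoint apply_upto (th : nat -> subst) (j : nat) (G : goal) : goal :=
  match j with
  | 0 => G
  | S j' => gsubst (th j') (apply_upto th j' G)
  end.

Definition pruned_EVR_L (len : option nat) (G0 : goal) (g : nat -> goal) (th : nat -> subst) : Prop :=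
  exists i j tau, i < j /\ goal_in len j /\ renaming tau /\
    apply_upto th j G0 = gsubst tau (apply_upto th i G0) /\
    g j = gsubst tau (g i).

End Syntax.

Arguments Var {Fsym}.

From Pilot Require Import Defs.
From Stdlib Require Import List Arith Lia Classical ClassicalEpsilon.
Import ListNotations.
Set Implicit Arguments. Unset Strict Implicit.

(* Each SLD step lengthens the resolvent by at most the longest clause body,
   so it suffices to find a depth [d] by which every derivation contains a
   variant pair [G_j = G_i tau] (i < j <= d): such a pair can be cut out by
   transplanting the derivation after [G_j] to [G_i], and repeating this moves
   every resolvent to depth at most [d].  Such a [d] exists by König's lemma.
   Up to renaming of variables a step is determined by the chosen clause and
   atom, so derivation prefixes form a finitely branching tree; if there were
   variant-free derivations of every depth, the tree would have an infinite
   variant-free branch, an infinite derivation that EVR_L does not prune. *)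

(** * Substitutions *)

Section Substitutions.
Variables Fsym Psym : Type.
Notation term := (term Fsym).
Notation atom := (atom Fsym Psym).
Notation goal := (goal Fsym Psym).
Notation clause := (clause Fsym Psym).

Lemma term_ind_in (Q : term -> Prop) :
  (forall x, Q (Var x)) ->
  (forall f ts, (forall t, In t ts -> Q t) -> Q (Fn f ts)) ->
  forall t, Q t.
Proof.
  intros HV HF. fix IH 1. intros [x | f ts].
  - apply HV.
  - apply HF. induction ts as [|t ts IHts]; intros u Hu; [destruct Hu|].
    destruct Hu as [<- | Hu]; [apply IH | apply IHts, Hu].
Qed.

Lemma tsubst_comp (s t : subst Fsym) (u : term) :
  tsubst s (tsubst t u) = tsubst (fun x => tsubst s (t x)) u.
Proof.
  induction u using term_ind_in; simpl; auto.
  f_equal. rewrite map_map. apply map_ext_in. auto.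
Qed.

Lemma tsubst_ext (s s' : subst Fsym) (u : term) :
  (forall x, In x (tvars u) -> s x = s' x) -> tsubst s u = tsubst s' u.
Proof.
  induction u using term_ind_in; simpl; intros E.
  - apply E; auto.
  - f_equal. apply map_ext_in. intros t Ht. apply H; auto.
    intros x Hx. apply E, in_flat_map. eauto.
Qed.

Lemma tsubst_Var (u : term) : tsubst (fun x => Var x) u = u.
Proof.
  induction u using term_ind_in; simpl; auto.
  f_equal. rewrite <- (map_id ts) at 2. apply map_ext_in; auto.
Qed.

Lemma in_tvars_tsubst (s : subst Fsym) (u : term) y :
  In y (tvars (tsubst s u)) <-> exists x, In x (tvars u) /\ In y (tvars (s x)).
Proof.
  induction u using term_ind_in; simpl.
  - split; [eauto | intros [z [[<- | []] Hz]]; auto].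
  - rewrite in_flat_map. split.
    + intros [t [Ht Hy]]. apply in_map_iff in Ht. destruct Ht as [t' [<- Ht']].
      apply H in Hy; auto. destruct Hy as [x [Hx Hy]].
      exists x. split; auto. apply in_flat_map; eauto.
    + intros [x [Hx Hy]]. apply in_flat_map in Hx. destruct Hx as [t [Ht Hx]].
      exists (tsubst s t). split; [apply in_map; auto | apply H; eauto].
Qed.

Lemma tsubst_fixed_Var (s : subst Fsym) (u : term) :
  tsubst s u = u -> forall x, In x (tvars u) -> s x = Var x.
Proof.
  induction u using term_ind_in; simpl; intros E z Hz.
  - destruct Hz as [<- | []]; auto.
  - injection E as E. apply in_flat_map in Hz. destruct Hz as [t [Ht Hz]].
    apply (H t Ht); auto.
    clear - E Ht. induction ts as [|t' ts IHts]; [destruct Ht|].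
    injection E as E1 E2. destruct Ht as [<- | Ht]; auto.
Qed.

Lemma tsubst_eq_Var (s : subst Fsym) (u : term) y :
  tsubst s u = Var y -> exists z, u = Var z /\ s z = Var y.
Proof. destruct u; simpl; intros E; [eauto | discriminate]. Qed.

Lemma asubst_comp (s t : subst Fsym) (a : atom) :
  asubst s (asubst t a) = asubst (fun x => tsubst s (t x)) a.
Proof.
  unfold asubst; simpl. f_equal. rewrite map_map. apply map_ext. intros; apply tsubst_comp.
Qed.

Lemma asubst_ext (s s' : subst Fsym) (a : atom) :
  (forall x, In x (avars a) -> s x = s' x) -> asubst s a = asubst s' a.
Proof.
  unfold asubst, avars; intros E. f_equal. apply map_ext_in. intros t Ht.
  apply tsubst_ext. intros x Hx. apply E, in_flat_map; eauto.
Qed.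

Lemma in_avars_asubst (s : subst Fsym) (a : atom) y :
  In y (avars (asubst s a)) <-> exists x, In x (avars a) /\ In y (tvars (s x)).
Proof.
  unfold avars, asubst; simpl. rewrite in_flat_map. split.
  - intros [t [Ht Hy]]. apply in_map_iff in Ht. destruct Ht as [t' [<- Ht']].
    apply in_tvars_tsubst in Hy. destruct Hy as [x [Hx Hy]].
    exists x. split; auto. apply in_flat_map; eauto.
  - intros [x [Hx Hy]]. apply in_flat_map in Hx. destruct Hx as [t [Ht Hx]].
    exists (tsubst s t). split; [apply in_map; auto | apply in_tvars_tsubst; eauto].
Qed.

Lemma gsubst_comp (s t : subst Fsym) (g : goal) :
  gsubst s (gsubst t g) = gsubst (fun x => tsubst s (t x)) g.
Proof.
  unfold gsubst. rewrite map_map. apply map_ext. intros; apply asubst_comp.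
Qed.

Lemma gsubst_ext (s s' : subst Fsym) (g : goal) :
  (forall x, In x (gvars g) -> s x = s' x) -> gsubst s g = gsubst s' g.
Proof.
  unfold gsubst, gvars; intros E. apply map_ext_in. intros a Ha.
  apply asubst_ext. intros x Hx. apply E, in_flat_map; eauto.
Qed.

Lemma gsubst_Var (g : goal) : gsubst (fun x => Var x) g = g.
Proof.
  unfold gsubst. rewrite <- (map_id g) at 2. apply map_ext. intros [p l].
  unfold asubst; simpl. f_equal. rewrite <- (map_id l) at 2. apply map_ext, tsubst_Var.
Qed.

Lemma in_gvars_gsubst (s : subst Fsym) (g : goal) y :
  In y (gvars (gsubst s g)) <-> exists x, In x (gvars g) /\ In y (tvars (s x)).
Proof.
  unfold gvars, gsubst. rewrite in_flat_map. split.
  - intros [a [Ha Hy]]. apply in_map_iff in Ha. destruct Ha as [a' [<- Ha']].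
    apply in_avars_asubst in Hy. destruct Hy as [x [Hx Hy]].
    exists x. split; auto. apply in_flat_map; eauto.
  - intros [x [Hx Hy]]. apply in_flat_map in Hx. destruct Hx as [a [Ha Hx]].
    exists (asubst s a). split; [apply in_map; auto | apply in_avars_asubst; eauto].
Qed.

Lemma in_gvars_app (g1 g2 : goal) x :
  In x (gvars (g1 ++ g2)) <-> In x (gvars g1) \/ In x (gvars g2).
Proof. unfold gvars. rewrite flat_map_app. apply in_app_iff. Qed.

Lemma gvars_incl (g1 g2 : goal) : incl g1 g2 -> incl (gvars g1) (gvars g2).
Proof.
  unfold gvars; intros H x Hx. apply in_flat_map in Hx. destruct Hx as [a [Ha Hx]].
  apply in_flat_map; eauto.
Qed.

Lemma in_cvars_csubst (s : subst Fsym) (c : clause) y :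
  In y (cvars (csubst s c)) <-> exists x, In x (cvars c) /\ In y (tvars (s x)).
Proof.
  unfold cvars, csubst; simpl. rewrite in_app_iff, in_avars_asubst, in_gvars_gsubst. split.
  - intros [[x [Hx Hy]] | [x [Hx Hy]]]; exists x; rewrite in_app_iff; auto.
  - intros [x [Hx Hy]]. apply in_app_iff in Hx. destruct Hx; [left | right]; eauto.
Qed.

Lemma in_cvars_csubst_renaming (xi : subst Fsym) f (c : clause) z :
  (forall x, xi x = Var (f x)) ->
  In z (cvars (csubst xi c)) <-> exists y, In y (cvars c) /\ z = f y.
Proof.
  intros Hf. rewrite in_cvars_csubst.
  split; intros [y [H1 H2]]; exists y; split; auto; rewrite Hf in *; simpl in *; intuition.
Qed.

End Substitutions.

(** * Finite permutations of variables *)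

Definition perm_on (p q : nat -> nat) (W : list nat) : Prop :=
  (forall x, p (q x) = x) /\ (forall x, q (p x) = x) /\ (forall x, ~ In x W -> p x = x).

Definition psub {Fsym} (p : nat -> nat) : subst Fsym := fun x => Var (p x).

Section Permutations.
Implicit Types (p q : nat -> nat) (W : list nat).

Lemma perm_on_inj p q W x y : perm_on p q W -> p x = p y -> x = y.
Proof. intros [_ [K _]] E. rewrite <- (K x), E, K. reflexivity. Qed.

Lemma perm_on_inv_fixed p q W x : perm_on p q W -> ~ In x W -> q x = x.
Proof. intros [_ [K F]] Hx. rewrite <- (F x Hx) at 1. apply K. Qed.

Lemma perm_on_mem p q W x : perm_on p q W -> In x W <-> In (p x) W.
Proof.
  intros Pp. pose proof Pp as [_ [_ F]]. split; intros Hx.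
  - destruct (in_dec Nat.eq_dec (p x) W) as [|Hn]; auto.
    assert (p (p x) = p x) as E by auto.
    apply (perm_on_inj Pp) in E. rewrite E in Hn. contradiction.
  - destruct (in_dec Nat.eq_dec x W) as [|Hn]; auto. rewrite F in Hx; auto.
Qed.

Lemma perm_on_sym p q W : perm_on p q W -> perm_on q p W.
Proof.
  intros Pp. pose proof Pp as [H1 [H2 _]]. repeat split; auto.
  intros x Hx. apply (perm_on_inv_fixed Pp Hx).
Qed.

Lemma perm_on_id : perm_on (fun x => x) (fun x => x) [].
Proof. repeat split; auto. Qed.

Lemma perm_on_comp p q W p' q' W' :
  perm_on p q W -> perm_on p' q' W' ->
  perm_on (fun x => p' (p x)) (fun x => q (q' x)) (W ++ W').
Proof.
  intros [H1 [H2 H3]] [H1' [H2' H3']]. repeat split; intros x.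
  - rewrite H1. auto.
  - rewrite H2'. auto.
  - rewrite in_app_iff. intros Hx. rewrite H3, H3'; auto.
Qed.

Lemma perm_on_weaken p q V W : perm_on p q V -> incl V W -> perm_on p q W.
Proof. intros [H1 [H2 H3]] I. repeat split; auto. Qed.

Lemma perm_on_large p q W x : perm_on p q W -> list_max W < x -> p x = x /\ q x = x.
Proof.
  intros Pp Hx. assert (~ In x W) as Hn.
  { intros Hi. pose proof (proj1 (list_max_le W _) (le_n _)) as F.
    rewrite Forall_forall in F. specialize (F x Hi). lia. }
  split; [apply Pp, Hn | apply (perm_on_inv_fixed Pp Hn)].
Qed.

Lemma renaming_conj {Fsym} (tau : subst Fsym) p1 q1 W1 p2 q2 W2 :
  renaming tau -> perm_on p1 q1 W1 -> perm_on p2 q2 W2 ->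
  renaming (fun x => tsubst (psub p2) (tau (q1 x))).
Proof.
  intros [f [Hf [Hinj [Hsurj [n Hn]]]]] P1 P2.
  pose proof P1 as [B1 [B2 _]]. pose proof P2 as [A1 [A2 _]].
  exists (fun x => p2 (f (q1 x))). split; [|split; [|split]].
  - intros x. rewrite Hf. reflexivity.
  - intros x y E. apply (f_equal q2) in E. rewrite !A2 in E. apply Hinj in E.
    apply (f_equal p1) in E. rewrite !B1 in E. auto.
  - intros y. destruct (Hsurj (q2 y)) as [x Hx]. exists (p1 x). rewrite B2, Hx. auto.
  - exists (S (max n (max (list_max W1) (list_max W2)))). intros x Hx.
    rewrite (proj2 (perm_on_large P1 (x := x) ltac:(lia))), Hn by lia.
    apply (perm_on_large P2). lia.
Qed.

Lemma renaming_psub_comp {Fsym} (tau : subst Fsym) p q W :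
  renaming tau -> perm_on p q W -> renaming (fun x => tsubst (psub p) (tau x)).
Proof. intros R Pp. exact (renaming_conj R perm_on_id Pp). Qed.

Definition swap (a b x : nat) : nat :=
  if Nat.eqb x a then b else if Nat.eqb x b then a else x.

Lemma swap_involutive a b x : swap a b (swap a b x) = x.
Proof.
  unfold swap. destruct (Nat.eqb_spec x a) as [->|Ha].
  - destruct (Nat.eqb_spec b a); [lia|]. rewrite Nat.eqb_refl. auto.
  - destruct (Nat.eqb_spec x b) as [->|Hb].
    + rewrite Nat.eqb_refl. auto.
    + destruct (Nat.eqb_spec x a); [lia|]. destruct (Nat.eqb_spec x b); [lia|]. auto.
Qed.

(* Built by composing with one transposition per pair. *)
Lemma perm_on_extend W (E : list (nat * nat)) :
  (forall a b, In (a, b) E -> In a W /\ In b W) ->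
  (forall a b a' b', In (a, b) E -> In (a', b') E -> (a = a' <-> b = b')) ->
  exists p q, perm_on p q W /\ forall a b, In (a, b) E -> p a = b.
Proof.
  induction E as [|[a b] E IH]; intros HW HC.
  - exists (fun x => x), (fun x => x). split; [repeat split; auto | intros a b []].
  - destruct IH as [p [q [Pp Hp]]]; [intros; apply HW; simpl; auto
                                     | intros; apply HC; simpl; auto |].
    set (c := p a).
    assert (Ha : In a W /\ In b W) by (apply HW; simpl; auto).
    assert (Hc : In c W) by (apply (perm_on_mem a Pp); tauto).
    exists (fun x => swap c b (p x)), (fun x => q (swap c b x)).
    pose proof Pp as [P1 [P2 P3]]. split.
    + repeat split; intros x.
      * rewrite P1. apply swap_involutive.
      * rewrite swap_involutive. auto.
      * intros Hx. rewrite P3 by auto. unfold swap.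
        destruct (Nat.eqb_spec x c); subst; try tauto.
        destruct (Nat.eqb_spec x b); subst; tauto.
    + intros a' b' [E1 | E1].
      * injection E1 as <- <-. unfold swap. fold c. rewrite Nat.eqb_refl. auto.
      * rewrite (Hp _ _ E1). unfold swap.
        destruct (Nat.eqb_spec b' c) as [e|ne].
        -- unfold c in e. rewrite <- (Hp _ _ E1) in e.
           apply (perm_on_inj Pp) in e. subst a'.
           assert (b' = b) as -> by (apply (HC a b' a b); simpl; auto). auto.
        -- destruct (Nat.eqb_spec b' b) as [->|nb]; auto.
           exfalso. apply ne. assert (a' = a) as -> by (apply (HC a' b a b); simpl; auto).
           rewrite <- (Hp _ _ E1). auto.
Qed.

Lemma perm_on_match_fresh W U Y (fA fB : nat -> nat) :
  incl U W -> (forall y, In y Y -> In (fA y) W /\ In (fB y) W) ->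
  (forall y y', fA y = fA y' -> y = y') -> (forall y y', fB y = fB y' -> y = y') ->
  (forall y, In y Y -> ~ In (fA y) U /\ ~ In (fB y) U) ->
  exists p q, perm_on p q W /\ (forall u, In u U -> p u = u) /\
    (forall y, In y Y -> p (fB y) = fA y).
Proof.
  intros HU HY InjA InjB Fr.
  destruct (@perm_on_extend W (map (fun u => (u, u)) U ++ map (fun y => (fB y, fA y)) Y))
    as [p [q [Pp Hp]]].
  - intros a b Hab. apply in_app_iff in Hab as [Hab | Hab];
      apply in_map_iff in Hab as [y [E Hy]]; injection E as <- <-; auto.
    apply and_comm, HY, Hy.
  - intros a b a' b' H1 H2.
    apply in_app_iff in H1 as [H1 | H1]; apply in_map_iff in H1 as [y [E1 Hy]];
      injection E1 as <- <-;
    apply in_app_iff in H2 as [H2 | H2]; apply in_map_iff in H2 as [y' [E2 Hy']];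
      injection E2 as <- <-.
    + tauto.
    + destruct (Fr y' Hy'). split; intros ->; contradiction.
    + destruct (Fr y Hy). split; intros <-; contradiction.
    + split; intros E; [apply InjB in E | apply InjA in E]; subst; auto.
  - exists p, q. split; [|split]; auto; intros; apply Hp, in_app_iff; [left | right];
      apply in_map_iff; eauto.
Qed.

End Permutations.

(** * Relevant mgus up to renaming *)

Section Conjugation.
Variables Fsym Psym : Type.
Notation term := (term Fsym).
Notation atom := (atom Fsym Psym).
Notation goal := (goal Fsym Psym).

Definition conj_subst (p q : nat -> nat) (th : subst Fsym) : subst Fsym :=
  fun x => tsubst (psub p) (th (q x)).

Lemma tsubst_conj_subst p q W (th : subst Fsym) (t : term) : perm_on p q W ->
  tsubst (conj_subst p q th) (tsubst (psub p) t) = tsubst (psub p) (tsubst th t).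
Proof.
  intros [_ [K _]]. rewrite !tsubst_comp. apply tsubst_ext. intros x _.
  unfold conj_subst, psub at 2. simpl. rewrite K. reflexivity.
Qed.

Lemma asubst_conj_subst p q W (th : subst Fsym) (a : atom) : perm_on p q W ->
  asubst (conj_subst p q th) (asubst (psub p) a) = asubst (psub p) (asubst th a).
Proof.
  intros Pp. unfold asubst; simpl. f_equal. rewrite !map_map.
  apply map_ext. intros; apply (tsubst_conj_subst _ _ Pp).
Qed.

Lemma gsubst_conj_subst p q W (th : subst Fsym) (g : goal) : perm_on p q W ->
  gsubst (conj_subst p q th) (gsubst (psub p) g) = gsubst (psub p) (gsubst th g).
Proof.
  intros Pp. unfold gsubst. rewrite !map_map. apply map_ext.
  intros; apply (asubst_conj_subst _ _ Pp).
Qed.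

Lemma in_avars_psub p (a : atom) y :
  In y (avars (asubst (psub p) a)) <-> exists x, In x (avars a) /\ y = p x.
Proof.
  rewrite in_avars_asubst. unfold psub; simpl.
  split; intros [x [H1 H2]]; exists x; intuition.
Qed.

Lemma mgu_conj_subst p q W (th : subst Fsym) (a1 a2 : atom) : perm_on p q W ->
  mgu th a1 a2 -> mgu (conj_subst p q th) (asubst (psub p) a1) (asubst (psub p) a2).
Proof.
  intros Pp [U M]. pose proof Pp as [P1 [P2 _]]. split.
  - unfold unifier in *. rewrite !(asubst_conj_subst _ _ Pp), U. reflexivity.
  - intros s Hs. destruct (M (fun x => s (p x))) as [eta Heta].
    + unfold unifier in *. rewrite !asubst_comp in Hs. exact Hs.
    + exists (fun y => eta (q y)). intros x. unfold conj_subst.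
      rewrite tsubst_comp. rewrite <- (P1 x) at 1. rewrite Heta.
      apply tsubst_ext. intros; simpl; rewrite P2; reflexivity.
Qed.

Lemma idempotent_conj_subst p q W (th : subst Fsym) : perm_on p q W ->
  idempotent th -> idempotent (conj_subst p q th).
Proof.
  intros Pp I x. unfold conj_subst at 2. rewrite (tsubst_conj_subst _ _ Pp), I. reflexivity.
Qed.

Lemma relevant_conj_subst p q W (th : subst Fsym) (a1 a2 : atom) : perm_on p q W ->
  relevant th a1 a2 -> relevant (conj_subst p q th) (asubst (psub p) a1) (asubst (psub p) a2).
Proof.
  intros Pp R x Hx. pose proof Pp as [P1 [P2 _]].
  assert (Hq : th (q x) <> Var (q x)).
  { intros E. apply Hx. unfold conj_subst. rewrite E. simpl. unfold psub. rewrite P1. auto. }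
  destruct (R _ Hq) as [R1 R2]. split.
  - rewrite in_app_iff, !in_avars_psub. rewrite in_app_iff in R1.
    destruct R1; [left | right]; exists (q x); auto.
  - intros y Hy. unfold conj_subst in Hy. apply in_tvars_tsubst in Hy.
    destruct Hy as [z [Hz [<- | []]]].
    specialize (R2 z Hz). rewrite in_app_iff, !in_avars_psub. rewrite in_app_iff in R2.
    destruct R2; [left | right]; exists z; auto.
Qed.

Lemma relevant_tvars (th : subst Fsym) (a1 a2 : atom) x y :
  relevant th a1 a2 -> In y (tvars (th x)) -> y = x \/ In y (avars a1 ++ avars a2).
Proof.
  intros R Hy. destruct (classic (th x = Var x)) as [E|N].
  - rewrite E in Hy. destruct Hy as [<- | []]; auto.
  - right. apply (proj2 (R x N)). auto.
Qed.

Lemma relevant_fixed (th : subst Fsym) (a1 a2 : atom) x :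
  relevant th a1 a2 -> ~ In x (avars a1 ++ avars a2) -> th x = Var x.
Proof.
  intros R Hx. apply NNPP. intros N. apply Hx, (proj1 (R x N)).
Qed.

Definition var_index (t : term) : nat := match t with Var z => z | _ => 0 end.

(* If th1 = th2 eta and th2 = th1 eta', then eta' eta is the identity on the
   range of th1, so eta maps those variables injectively to variables. *)
Lemma relevant_mgu_unique (th1 th2 : subst Fsym) (a1 a2 : atom) :
  relevant th1 a1 a2 -> mgu th1 a1 a2 -> relevant th2 a1 a2 -> mgu th2 a1 a2 ->
  exists p q, perm_on p q (avars a1 ++ avars a2) /\
    forall x, th2 x = tsubst (psub p) (th1 x).
Proof.
  intros R1 [U1 M1] R2 [U2 M2].
  set (V := avars a1 ++ avars a2).
  destruct (M1 th2 U2) as [eta He]. destruct (M2 th1 U1) as [eta' He'].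
  assert (Hfix : forall x y, In y (tvars (th1 x)) -> tsubst eta' (eta y) = Var y).
  { intros x y Hy. apply (@tsubst_fixed_Var Fsym (fun z => tsubst eta' (eta z)) (th1 x)); auto.
    rewrite <- tsubst_comp, <- He, <- He'. reflexivity. }
  set (Rg := flat_map (fun x => tvars (th1 x)) V).
  destruct (@perm_on_extend V (map (fun y => (y, var_index (eta y))) Rg)) as [p [q [Pp Hp]]].
  - intros a b Hab. apply in_map_iff in Hab. destruct Hab as [y [E Hy]].
    injection E as <- <-. apply in_flat_map in Hy. destruct Hy as [x [Hx Hy]]. split.
    + destruct (relevant_tvars R1 Hy) as [->|]; auto.
    + destruct (tsubst_eq_Var (Hfix x y Hy)) as [z [Ez _]]. rewrite Ez. simpl.
      assert (In z (tvars (th2 x))).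
      { rewrite He. apply in_tvars_tsubst. exists y. rewrite Ez. simpl. auto. }
      destruct (relevant_tvars R2 H) as [->|]; auto.
  - intros a b a' b' H1 H2. apply in_map_iff in H1. apply in_map_iff in H2.
    destruct H1 as [y [E1 Hy]]. destruct H2 as [y' [E2 Hy']].
    injection E1 as <- <-. injection E2 as <- <-. split; intros E; [subst; auto|].
    apply in_flat_map in Hy. apply in_flat_map in Hy'.
    destruct Hy as [x [_ Hy]]. destruct Hy' as [x' [_ Hy']].
    destruct (tsubst_eq_Var (Hfix _ _ Hy)) as [z [Ez Fz]].
    destruct (tsubst_eq_Var (Hfix _ _ Hy')) as [z' [Ez' Fz']].
    rewrite Ez, Ez' in E. simpl in E. subst z'. rewrite Fz in Fz'. injection Fz'. auto.
  - exists p, q. split; auto. intros x.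
    destruct (in_dec Nat.eq_dec x V) as [Hx|Hx].
    + rewrite He. apply tsubst_ext. intros y Hy.
      unfold psub. rewrite (Hp y (var_index (eta y))).
      * destruct (tsubst_eq_Var (Hfix _ _ Hy)) as [z [Ez _]]. rewrite Ez. reflexivity.
      * apply in_map_iff. exists y. split; auto. apply in_flat_map. eauto.
    + rewrite (relevant_fixed R1 Hx), (relevant_fixed R2 Hx). simpl.
      unfold psub. rewrite (proj2 (proj2 Pp)); auto.
Qed.

End Conjugation.

(** * SLD steps and derivations *)

Section Resolution.
Variables Fsym Psym : Type.
Notation goal := (goal Fsym Psym).
Notation clause := (clause Fsym Psym).
Variable P : program Fsym Psym.

Definition resolvent (G : goal) (c : clause) (xi th : subst Fsym) (i : nat) : goal :=
  gsubst th (firstn i G ++ gsubst xi (body c) ++ skipn (S i) G).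

Definition step_at (G : goal) (c : clause) (xi th : subst Fsym) (G' : goal) (i : nat) : Prop :=
  In c P /\ renaming xi /\ exists a, nth_error G i = Some a /\ idempotent th /\
    relevant th (asubst xi (Defs.head c)) a /\ mgu th (asubst xi (Defs.head c)) a /\
    G' = resolvent G c xi th i.

Lemma sld_step_iff G c xi th G' : sld_step P G c xi th G' <-> exists i, step_at G c xi th G' i.
Proof.
  unfold sld_step, step_at, resolvent. split.
  - intros [H1 [H2 [i [a H]]]]. exists i. split; auto. split; auto. exists a; auto.
  - intros [i [H1 [H2 [a H]]]]. split; auto. split; auto. exists i, a; auto.
Qed.

Lemma step_at_vars G c xi th G' i : step_at G c xi th G' i ->
  forall y, In y (gvars G') -> In y (gvars G) \/ In y (cvars (csubst xi c)).
Proof.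
  intros [_ [_ [a [Ha [_ [R [_ ->]]]]]]] y Hy. unfold resolvent in Hy.
  apply in_gvars_gsubst in Hy. destruct Hy as [x [Hx Hy]].
  assert (Hpre : incl (firstn i G) G).
  { intros z Hz. rewrite <- (firstn_skipn i G). apply in_or_app. auto. }
  assert (Hpost : incl (skipn (S i) G) G).
  { intros z Hz. rewrite <- (firstn_skipn (S i) G). apply in_or_app. auto. }
  assert (Hx' : In x (gvars G) \/ In x (cvars (csubst xi c))).
  { unfold cvars, csubst; simpl. rewrite in_app_iff.
    apply in_gvars_app in Hx as [Hx|Hx]; [|apply in_gvars_app in Hx as [Hx|Hx]].
    - left. exact (gvars_incl Hpre Hx).
    - auto.
    - left. exact (gvars_incl Hpost Hx). }
  destruct (relevant_tvars R Hy) as [->|Hin]; auto.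
  apply in_app_iff in Hin as [Hin|Hin].
  - right. unfold cvars, csubst; simpl. apply in_app_iff. auto.
  - left. apply in_flat_map. exists a. split; auto. eapply nth_error_In; eauto.
Qed.

Lemma step_at_length G c xi th G' i : step_at G c xi th G' i ->
  i < length G /\ length G' = length G - 1 + length (body c).
Proof.
  intros [_ [_ [a [Ha [_ [_ [_ ->]]]]]]].
  assert (i < length G) by (apply nth_error_Some; congruence).
  split; auto. unfold resolvent, gsubst.
  rewrite !length_map, !length_app, length_firstn, length_map, length_skipn. lia.
Qed.

Lemma step_at_psub G c xi th G' i p q W :
  step_at G c xi th G' i -> perm_on p q W ->
  step_at (gsubst (psub p) G) c (fun x => tsubst (psub p) (xi x)) (conj_subst p q th)
          (gsubst (psub p) G') i.
Proof.
  intros [Hc [Rx [a [Ha [I [R [M ->]]]]]]] Pp.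
  split; auto. split; [apply (renaming_psub_comp Rx Pp)|].
  assert (Hh : asubst (fun x => tsubst (psub p) (xi x)) (Defs.head c) =
               asubst (psub p) (asubst xi (Defs.head c))) by (rewrite asubst_comp; auto).
  exists (asubst (psub p) a). rewrite Hh. split; [|split; [|split; [|split]]].
  - apply map_nth_error. auto.
  - apply (idempotent_conj_subst Pp I).
  - apply (relevant_conj_subst Pp R).
  - apply (mgu_conj_subst Pp M).
  - unfold resolvent. rewrite <- (gsubst_conj_subst _ _ Pp). f_equal.
    unfold gsubst. rewrite !map_app, firstn_map, skipn_map, map_map.
    do 2 f_equal. apply map_ext. intros; rewrite asubst_comp; reflexivity.
Qed.

(* by uniqueness of relevant mgus up to a permutation of variables *)
Lemma step_at_unique G c xi th G' xi' th' G'' i :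
  step_at G c xi th G' i -> step_at G c xi' th' G'' i ->
  asubst xi (Defs.head c) = asubst xi' (Defs.head c) -> gsubst xi (body c) = gsubst xi' (body c) ->
  exists p q, perm_on p q (gvars G ++ cvars (csubst xi' c)) /\ G'' = gsubst (psub p) G'.
Proof.
  intros [_ [_ [a [Ha [_ [R [M ->]]]]]]] [_ [_ [a' [Ha' [_ [R' [M' ->]]]]]]] Eh Eb.
  rewrite Ha in Ha'. injection Ha' as <-. rewrite Eh in R, M.
  destruct (relevant_mgu_unique R M R' M') as [p [q [Pp Hp]]].
  exists p, q. split.
  - apply (perm_on_weaken Pp). intros x Hx. apply in_app_iff in Hx. apply in_app_iff.
    destruct Hx as [Hx|Hx].
    + right. unfold cvars, csubst; simpl. apply in_app_iff; auto.
    + left. apply in_flat_map. exists a. split; auto. eapply nth_error_In; eauto.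
  - unfold resolvent. rewrite Eb, gsubst_comp. apply gsubst_ext. auto.
Qed.

End Resolution.

Record trace (Fsym Psym : Type) : Type := Trace {
  goals : nat -> goal Fsym Psym;
  clauses : nat -> clause Fsym Psym;
  renamings : nat -> subst Fsym;
  mgus : nat -> subst Fsym }.

Lemma step_in_goal_in len j : step_in len j -> goal_in len j.
Proof. destruct len; simpl; auto; lia. Qed.

Lemma goal_in_step_in len j : goal_in len (S j) -> step_in len j.
Proof. destruct len; simpl; auto. Qed.

Lemma goal_in_le len j k : k <= j -> goal_in len j -> goal_in len k.
Proof. destruct len; simpl; auto; lia. Qed.

Section Derivations.
Variables Fsym Psym : Type.
Notation goal := (goal Fsym Psym).
Notation trace := (trace Fsym Psym).
Variable P : program Fsym Psym.
Variable G0 : goal.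

Definition derivation (len : option nat) (t : trace) : Prop :=
  sld_derivation P G0 len (goals t) (clauses t) (renamings t) (mgus t).

Definition step_vars (t : trace) (k : nat) : list nat :=
  cvars (csubst (renamings t k) (clauses t k)).

Fixpoint used (t : trace) (k : nat) : list nat :=
  match k with
  | 0 => gvars G0
  | S k' => used t k' ++ step_vars t k'
  end.

Lemma in_used t k x :
  In x (used t k) <-> In x (gvars G0) \/ exists j, j < k /\ In x (step_vars t j).
Proof.
  induction k; simpl.
  - split; auto. intros [H | [j [Hj _]]]; [auto | lia].
  - rewrite in_app_iff, IHk. split.
    + intros [[H | [j [Hj H]]] | H]; auto; right; [exists j | exists k]; auto.
    + intros [H | [j [Hj H]]]; auto. destruct (Nat.eq_dec j k) as [->|]; auto.
      left. right. exists j. split; auto. lia.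
Qed.

Lemma used_mono t k k' x : k <= k' -> In x (used t k) -> In x (used t k').
Proof.
  intros Hk. rewrite !in_used. intros [H | [j [Hj H]]]; auto. right. exists j. split; auto. lia.
Qed.

Lemma step_vars_used t j k x : j < k -> In x (step_vars t j) -> In x (used t k).
Proof. intros Hj Hx. apply in_used. right. eauto. Qed.

Lemma derivation_start len t : derivation len t -> goals t 0 = G0.
Proof. intros [E _]. exact E. Qed.

Lemma derivation_step len t j : derivation len t -> step_in len j ->
  exists i, step_at P (goals t j) (clauses t j) (renamings t j) (mgus t j) (goals t (S j)) i.
Proof. intros [_ D] Hj. apply sld_step_iff, (D j Hj). Qed.

Lemma derivation_fresh len t j x : derivation len t -> step_in len j ->
  In x (step_vars t j) -> ~ In x (used t j).
Proof.
  intros [_ D] Hj Hx Hu. destruct (proj2 (D j Hj) x Hx) as [F1 F2].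
  apply in_used in Hu as [Hu | [k [Hk Hu]]]; [auto | apply (F2 k Hk Hu)].
Qed.

Lemma derivation_goal_vars len t k : derivation len t -> goal_in len k ->
  incl (gvars (goals t k)) (used t k).
Proof.
  intros D. induction k; intros Hk y Hy.
  - simpl. rewrite <- (derivation_start D). exact Hy.
  - destruct (derivation_step D (goal_in_step_in Hk)) as [i St].
    simpl. apply in_app_iff.
    destruct (step_at_vars St Hy); auto.
    left. apply IHk; auto. apply (goal_in_le (le_S _ _ (le_n k)) Hk).
Qed.

Lemma derivation_intro len t :
  goals t 0 = G0 ->
  (forall n, step_in len n ->
     (exists i, step_at P (goals t n) (clauses t n) (renamings t n) (mgus t n) (goals t (S n)) i) /\
     (forall x, In x (step_vars t n) -> ~ In x (used t n))) ->
  derivation len t.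
Proof.
  intros E D. split; auto. intros n Hn. destruct (D n Hn) as [[i St] F]. split.
  - apply sld_step_iff. eauto.
  - intros x Hx. split.
    + intros H. apply (F x Hx), in_used. auto.
    + intros k Hk H. apply (F x Hx), in_used. eauto.
Qed.

Lemma derivation_None_intro t : (forall k, derivation (Some k) t) -> derivation None t.
Proof.
  intros D. split; [apply (derivation_start (D 0))|].
  intros j _. apply (proj2 (D (S j)) j). simpl. lia.
Qed.

Lemma derivation_truncate len t m : derivation len t -> goal_in len m -> derivation (Some m) t.
Proof.
  intros [E D] Hm. split; auto. intros j Hj. apply D. destruct len; simpl in *; auto. lia.
Qed.

Definition max_body : nat := list_max (map (fun c => length (body c)) P).

Lemma derivation_length len t k : derivation len t -> goal_in len k ->
  length (goals t k) <= length G0 + k * max_body.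
Proof.
  intros D. induction k; intros Hk.
  - rewrite (derivation_start D). lia.
  - destruct (derivation_step D (goal_in_step_in Hk)) as [i St].
    destruct (step_at_length St) as [_ ->].
    assert (length (body (clauses t k)) <= max_body).
    { pose proof (proj1 (list_max_le _ _) (le_n max_body)) as F.
      rewrite Forall_forall in F. apply F, in_map_iff. exists (clauses t k).
      split; auto. apply St. }
    specialize (IHk (goal_in_le (le_S _ _ (le_n k)) Hk)). simpl. lia.
Qed.

End Derivations.

(** * Splicing derivations *)

Definition shift_len (i j : nat) (len : option nat) : option nat :=
  option_map (fun M => i + (M - j)) len.

Section Splicing.
Variables Fsym Psym : Type.
Notation trace := (trace Fsym Psym).
Variable P : program Fsym Psym.
Variable G0 : goal Fsym Psym.

Definition splice (A B : trace) (i j : nat) (p q : nat -> nat) : trace :=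
  Trace (fun n => if n <=? i then goals A n else gsubst (psub p) (goals B (n - i + j)))
        (fun n => if n <? i then clauses A n else clauses B (n - i + j))
        (fun n => if n <? i then renamings A n
                  else fun x => tsubst (psub p) (renamings B (n - i + j) x))
        (fun n => if n <? i then mgus A n else conj_subst p q (mgus B (n - i + j))).

Variables (A B : trace) (lenA lenB : option nat) (i j : nat) (p q : nat -> nat) (W : list nat).
Hypothesis derivA : derivation P G0 lenA A.
Hypothesis derivB : derivation P G0 lenB B.
Hypothesis goal_in_A : goal_in lenA i.
Hypothesis goal_in_B : goal_in lenB j.
Hypothesis perm_p : perm_on p q W.
Hypothesis splice_point : gsubst (psub p) (goals B j) = goals A i.
Hypothesis used_back : forall x, In (p x) (used G0 A i) -> In x (used G0 B j).

Notation C := (splice A B i j p q).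

Lemma splice_goals_le n : n <= i -> goals C n = goals A n.
Proof. intros Hn. simpl. apply Nat.leb_le in Hn. rewrite Hn. reflexivity. Qed.

Lemma splice_goals_shift m : goals C (i + m) = gsubst (psub p) (goals B (j + m)).
Proof.
  simpl. destruct (Nat.leb_spec (i + m) i).
  - replace m with 0 by lia. rewrite !Nat.add_0_r. symmetry. exact splice_point.
  - f_equal. f_equal. lia.
Qed.

Lemma splice_step_lt n : n < i ->
  clauses C n = clauses A n /\ renamings C n = renamings A n /\ mgus C n = mgus A n.
Proof. intros Hn. simpl. apply Nat.ltb_lt in Hn. rewrite Hn. auto. Qed.

Lemma splice_step_shift m :
  clauses C (i + m) = clauses B (j + m) /\
  renamings C (i + m) = (fun x => tsubst (psub p) (renamings B (j + m) x)) /\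
  mgus C (i + m) = conj_subst p q (mgus B (j + m)).
Proof.
  simpl. destruct (Nat.ltb_spec (i + m) i); [lia|].
  replace (i + m - i + j) with (j + m) by lia. auto.
Qed.

Lemma in_step_vars_splice_shift m x :
  In x (step_vars C (i + m)) <-> exists z, In z (step_vars B (j + m)) /\ x = p z.
Proof.
  unfold step_vars. destruct (splice_step_shift m) as [-> [-> _]].
  rewrite in_cvars_csubst. setoid_rewrite in_cvars_csubst. unfold psub. split.
  - intros [y [Hy Hx]]. apply in_tvars_tsubst in Hx as [z [Hz [<- | []]]]. eauto.
  - intros [z [[y [Hy Hz]] ->]]. exists y. split; auto.
    apply in_tvars_tsubst. exists z. simpl. auto.
Qed.

Lemma used_splice_le n : n <= i -> used G0 C n = used G0 A n.
Proof.
  induction n as [|n IH]; intros Hn; simpl; auto.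
  rewrite IH by lia. unfold step_vars. destruct (splice_step_lt (n := n)) as [-> [-> _]]; auto.
Qed.

Lemma splice_step_fresh_shift m : step_in lenB (j + m) ->
  forall x, In x (step_vars C (i + m)) -> ~ In x (used G0 C (i + m)).
Proof.
  intros Hs x Hx Hu. apply in_step_vars_splice_shift in Hx as [z [Hz ->]].
  apply (derivation_fresh derivB Hs Hz).
  apply in_used in Hu as [Hu | [k [Hk Hu]]].
  - apply (used_mono (k := j)); [lia|]. apply used_back. apply in_used. auto.
  - destruct (Nat.lt_ge_cases k i) as [Hki | Hki].
    + apply (used_mono (k := j)); [lia|]. apply used_back.
      rewrite <- (used_splice_le (le_n i)). apply (step_vars_used G0 Hki Hu).
    + replace k with (i + (k - i)) in Hu by lia.
      apply in_step_vars_splice_shift in Hu as [z' [Hz' E]].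
      apply (perm_on_inj perm_p) in E. subst z'.
      apply (step_vars_used G0 (j := j + (k - i))); auto. lia.
Qed.

Lemma splice_derivation : derivation P G0 (shift_len i j lenB) C.
Proof.
  apply derivation_intro.
  - rewrite splice_goals_le by lia. apply (derivation_start derivA).
  - intros n Hn. destruct (Nat.lt_ge_cases n i) as [Hni | Hni].
    + assert (HsA : step_in lenA n) by (destruct lenA; simpl in *; lia).
      destruct (splice_step_lt Hni) as [Ec [Ex Et]].
      rewrite !splice_goals_le by lia. unfold step_vars. rewrite Ec, Ex, Et.
      rewrite used_splice_le by lia. split.
      * apply (derivation_step derivA HsA).
      * intros x. apply (derivation_fresh derivA HsA).
    + replace n with (i + (n - i)) in * by lia. set (m := n - i) in *.
      assert (HsB : step_in lenB (j + m)) by (destruct lenB; simpl in *; lia).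
      split; [|apply (splice_step_fresh_shift HsB)].
      destruct (splice_step_shift m) as [Ec [Ex Et]].
      rewrite Ec, Ex, Et, splice_goals_shift, <- Nat.add_succ_r, splice_goals_shift.
      destruct (derivation_step derivB HsB) as [idx St]. rewrite <- Nat.add_succ_r in St.
      exists idx. apply (step_at_psub St perm_p).
Qed.

End Splicing.

(* A variant pair [G_j = G_i tau] lets us cut out the steps between [i] and
   [j]: every later resolvent reappears, up to renaming, [j - i] steps earlier. *)
Lemma derivation_shorten Fsym Psym (P : program Fsym Psym) G0 len (t : trace Fsym Psym)
    i j k (tau : subst Fsym) :
  derivation P G0 len t -> i < j -> j <= k -> goal_in len k -> renaming tau ->
  goals t j = gsubst tau (goals t i) ->
  exists len' t', derivation P G0 len' t' /\ goal_in len' (k - (j - i)) /\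
    length (goals t' (k - (j - i))) = length (goals t k).
Proof.
  intros D Hij Hjk Hk [f [Hf [Inj _]]] Eij.
  assert (Gj : goal_in len j) by (apply (goal_in_le Hjk Hk)).
  assert (Gi : goal_in len i) by (apply (goal_in_le (j := k)); auto; lia).
  destruct (@perm_on_extend (used G0 t j) (map (fun y => (f y, y)) (gvars (goals t i))))
    as [p [q [Pp Hp]]].
  { intros a b Hab. apply in_map_iff in Hab as [y [E Hy]]. injection E as <- <-. split.
    - apply (derivation_goal_vars D Gj). rewrite Eij. apply in_gvars_gsubst.
      exists y. rewrite Hf. simpl. auto.
    - apply (used_mono (k := i)); [lia|]. apply (derivation_goal_vars D Gi). auto. }
  { intros a b a' b' H1 H2. apply in_map_iff in H1 as [y [E1 _]].
    apply in_map_iff in H2 as [y' [E2 _]]. injection E1 as <- <-. injection E2 as <- <-.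
    split; intros E; subst; auto. }
  assert (Hpoint : gsubst (psub p) (goals t j) = goals t i).
  { rewrite Eij, gsubst_comp. rewrite <- (gsubst_Var (goals t i)) at 2. apply gsubst_ext.
    intros y Hy. rewrite Hf. simpl. unfold psub. rewrite (Hp (f y) y); auto.
    apply in_map_iff. eauto. }
  assert (Hback : forall x, In (p x) (used G0 t i) -> In x (used G0 t j)).
  { intros x Hx. destruct (classic (In x (used G0 t j))) as [|Hn]; auto.
    rewrite (proj2 (proj2 Pp) x Hn) in Hx. apply (used_mono (k := i)); auto. lia. }
  exists (shift_len i j len), (splice t t i j p q). split; [|split].
  - exact (splice_derivation D D Gi Gj Pp Hpoint Hback).
  - destruct len; simpl in *; auto. lia.
  - replace (k - (j - i)) with (i + (k - j)) by lia.
    rewrite (splice_goals_shift q Hpoint). replace (j + (k - j)) with k by lia.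
    apply length_map.
Qed.

(** * König's lemma *)

Lemma monotone_pigeonhole {A} (L : list A) (Q : A -> nat -> Prop) :
  (forall l n n', n' <= n -> Q l n -> Q l n') ->
  (forall n, exists l, In l L /\ Q l n) -> exists l, In l L /\ forall n, Q l n.
Proof.
  intros Mono. induction L as [|a L IH]; intros H.
  - destruct (H 0) as [l [[] _]].
  - destruct (classic (forall n, Q a n)) as [Ha | Ha]; [exists a; simpl; auto|].
    apply not_all_ex_not in Ha as [na Hna].
    destruct IH as [l [Hl Ql]]; [|exists l; simpl; auto].
    intros n. destruct (H (max n na)) as [l [[<- | Hl] Ql]].
    + exfalso. apply Hna, (Mono a (max n na)); auto. lia.
    + exists l. split; auto. apply (Mono l (max n na)); auto. lia.
Qed.

Section Variants.
Variables Fsym Psym : Type.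
Notation goal := (goal Fsym Psym).
Notation trace := (trace Fsym Psym).
Variable P : program Fsym Psym.
Variable G0 : goal.
Notation derivation := (derivation P G0).
Notation used := (used G0).

Definition has_variant_pair (g : nat -> goal) (m : nat) : Prop :=
  exists i j (tau : subst Fsym), i < j /\ j <= m /\ renaming tau /\ g j = gsubst tau (g i).

Lemma has_variant_pair_mono g m m' : m <= m' -> has_variant_pair g m -> has_variant_pair g m'.
Proof. intros Hm [i [j [tau [Hij [Hj H]]]]]. exists i, j, tau. split; [|split]; auto. lia. Qed.

Lemma has_variant_pair_psub (g g' : nat -> goal) m :
  (forall n, exists p q W, perm_on p q W /\ g' n = gsubst (psub p) (g n)) ->
  has_variant_pair g' m -> has_variant_pair g m.
Proof.
  intros Hg [i [j [tau [Hij [Hj [R E]]]]]].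
  destruct (Hg i) as [pi [qi [Wi [Pi Ei]]]]. destruct (Hg j) as [pj [qj [Wj [Pj Ej]]]].
  exists i, j, (fun x => tsubst (psub qj) (tau (pi x))). repeat split; auto.
  - exact (renaming_conj R (perm_on_sym Pi) (perm_on_sym Pj)).
  - pose proof Pj as [_ [Kj _]].
    assert (Egj : g j = gsubst (psub qj) (g' j)).
    { rewrite Ej, gsubst_comp, <- (gsubst_Var (g j)) at 1. apply gsubst_ext.
      intros x _. unfold psub. simpl. rewrite Kj. reflexivity. }
    rewrite Egj, E, Ei, !gsubst_comp. apply gsubst_ext. reflexivity.
Qed.

Definition agree (k : nat) (A B : trace) : Prop :=
  (forall n, n <= k -> goals B n = goals A n) /\
  (forall n, n < k ->
     clauses B n = clauses A n /\ renamings B n = renamings A n /\ mgus B n = mgus A n).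

Lemma agree_sym k A B : agree k A B -> agree k B A.
Proof.
  intros [Hg Hs]. split; intros n Hn; [|destruct (Hs n Hn) as [? [? ?]]; repeat split];
    symmetry; auto.
Qed.

Lemma agree_trans k A B C : agree k A B -> agree k B C -> agree k A C.
Proof.
  intros [Hg Hs] [Hg' Hs']. split; intros n Hn.
  - rewrite Hg', Hg; auto.
  - destruct (Hs n Hn) as [? [? ?]]. destruct (Hs' n Hn) as [? [? ?]].
    repeat split; congruence.
Qed.

Lemma agree_le k k' A B : k' <= k -> agree k A B -> agree k' A B.
Proof. intros Hk [Hg Hs]. split; intros n Hn; [apply Hg | apply Hs]; lia. Qed.

Lemma used_agree k A B : agree k A B -> used B k = used A k.
Proof.
  induction k as [|k IH]; intros Hag; simpl; auto.
  rewrite IH by (apply (agree_le (le_S _ _ (le_n k)) Hag)).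
  unfold step_vars. destruct (proj2 Hag k (le_n _)) as [-> [-> _]]. reflexivity.
Qed.

Lemma derivation_agree k A B : derivation (Some k) A -> agree k A B -> derivation (Some k) B.
Proof.
  intros D Hag. pose proof Hag as [Hg Hs]. apply derivation_intro.
  - rewrite Hg by lia. apply (derivation_start D).
  - intros n Hn. simpl in Hn. destruct (Hs n Hn) as [Ec [Ex Et]].
    rewrite !Hg by lia. unfold step_vars.
    rewrite Ec, Ex, Et, (used_agree (agree_le (Nat.lt_le_incl _ _ Hn) Hag)).
    split; [apply (derivation_step D) | intros x; apply (derivation_fresh D)]; simpl; auto.
Qed.

(* The two renamings apart at step [k] differ only in the choice of fresh
   variables, which a permutation fixing the variables used so far reconciles. *)
Lemma agree_step_permutation k A B lenA lenB :
  derivation lenA A -> derivation lenB B -> step_in lenA k -> step_in lenB k ->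
  agree k A B -> clauses B k = clauses A k ->
  exists p q W, perm_on p q W /\ (forall u, In u (used A k) -> p u = u) /\
    (forall y, In y (cvars (clauses A k)) ->
       tsubst (psub p) (renamings B k y) = renamings A k y) /\
    (forall x, In (p x) (used A (S k)) -> In x (used B (S k))).
Proof.
  intros DA DB HA HB Hag Ec.
  destruct (derivation_step DA HA) as [_ [_ [[fA [HfA [InjA _]]] _]]].
  destruct (derivation_step DB HB) as [_ [_ [[fB [HfB [InjB _]]] _]]].
  set (c := clauses A k) in *.
  assert (HvA : forall z, In z (step_vars A k) <-> exists y, In y (cvars c) /\ z = fA y)
    by (intros; apply in_cvars_csubst_renaming, HfA).
  assert (HvB : forall z, In z (step_vars B k) <-> exists y, In y (cvars c) /\ z = fB y)
    by (intros; unfold step_vars; rewrite Ec; apply in_cvars_csubst_renaming, HfB).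
  assert (HU : used B k = used A k) by apply (used_agree Hag).
  assert (HUW : incl (used A k) (used A (S k) ++ used B (S k))).
  { intros u Hu. apply in_app_iff. left. simpl. apply in_app_iff. auto. }
  assert (HW : forall y, In y (cvars c) ->
            In (fA y) (used A (S k) ++ used B (S k)) /\ In (fB y) (used A (S k) ++ used B (S k))).
  { intros y Hy. split; apply in_app_iff; [left | right]; simpl; apply in_app_iff; right;
      [apply HvA | apply HvB]; eauto. }
  assert (Hfresh : forall y, In y (cvars c) -> ~ In (fA y) (used A k) /\ ~ In (fB y) (used A k)).
  { intros y Hy. split.
    - apply (derivation_fresh DA HA), HvA. eauto.
    - rewrite <- HU. apply (derivation_fresh DB HB), HvB. eauto. }
  destruct (perm_on_match_fresh HUW HW InjA InjB Hfresh) as [p [q [Pp [Hfix Hmatch]]]].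
  exists p, q, (used A (S k) ++ used B (S k)). split; [|split; [|split]]; auto.
  - intros y Hy. rewrite HfA, HfB. simpl. unfold psub. rewrite Hmatch; auto.
  - intros x Hx. simpl in Hx |- *. apply in_app_iff in Hx as [Hx | Hx]; apply in_app_iff.
    + left. rewrite HU. rewrite (perm_on_inj Pp (Hfix _ Hx)) in Hx. exact Hx.
    + right. apply HvA in Hx as [y [Hy E]]. rewrite <- (Hmatch y Hy) in E.
      apply (perm_on_inj Pp) in E. subst x. apply HvB. eauto.
Qed.

Lemma agree_step_variant k A B lenA lenB idx :
  derivation lenA A -> derivation lenB B -> step_in lenA k -> step_in lenB k ->
  agree k A B -> clauses B k = clauses A k ->
  step_at P (goals A k) (clauses A k) (renamings A k) (mgus A k) (goals A (S k)) idx ->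
  step_at P (goals B k) (clauses B k) (renamings B k) (mgus B k) (goals B (S k)) idx ->
  exists p q W, perm_on p q W /\ gsubst (psub p) (goals B (S k)) = goals A (S k) /\
    forall x, In (p x) (used A (S k)) -> In x (used B (S k)).
Proof.
  intros DA DB HA HB Hag Ec StA StB.
  destruct (agree_step_permutation DA DB HA HB Hag Ec) as [p [q [W [Pp [Hfix [Hren Hback]]]]]].
  assert (Hgoal : gsubst (psub p) (goals B k) = goals A k).
  { rewrite <- (gsubst_Var (goals A k)), <- (proj1 Hag k (le_n k)). apply gsubst_ext.
    intros x Hx. unfold psub. rewrite Hfix; auto.
    rewrite <- (used_agree Hag). apply (derivation_goal_vars DB (step_in_goal_in HB) Hx). }
  pose proof (step_at_psub StB Pp) as StB'. rewrite Hgoal, Ec in StB'.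
  destruct (step_at_unique StB' StA) as [pr [qr [Pr Er]]].
  { apply asubst_ext. intros y Hy. apply Hren, in_app_iff. auto. }
  { apply gsubst_ext. intros y Hy. apply Hren, in_app_iff. auto. }
  assert (Pr' : perm_on pr qr (used A (S k))).
  { apply (perm_on_weaken Pr). intros x Hx. simpl. apply in_app_iff.
    apply in_app_iff in Hx as [Hx | Hx]; [left | right; exact Hx].
    apply (derivation_goal_vars DA (step_in_goal_in HA) Hx). }
  exists (fun x => pr (p x)), (fun x => q (qr x)), (W ++ used A (S k)). split; [|split].
  - apply (perm_on_comp Pp Pr').
  - rewrite Er, gsubst_comp. reflexivity.
  - intros x Hx. apply Hback, (perm_on_mem (p x) Pr'), Hx.
Qed.

Lemma agree_resplice k n B0 Bn idx :
  derivation (Some (S k)) B0 -> derivation (Some (S k + n)) Bn ->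
  agree k B0 Bn -> clauses Bn k = clauses B0 k ->
  step_at P (goals B0 k) (clauses B0 k) (renamings B0 k) (mgus B0 k) (goals B0 (S k)) idx ->
  step_at P (goals Bn k) (clauses Bn k) (renamings Bn k) (mgus Bn k) (goals Bn (S k)) idx ->
  ~ has_variant_pair (goals Bn) (S k + n) ->
  exists C, derivation (Some (S k + n)) C /\ agree (S k) B0 C /\
    ~ has_variant_pair (goals C) (S k + n).
Proof.
  intros D0 Dn Hag Ec St0 Stn Hv.
  destruct (agree_step_variant D0 Dn (k := k) ltac:(simpl; lia) ltac:(simpl; lia) Hag Ec St0 Stn)
    as [p [q [W [Pp [Hpoint Hback]]]]].
  exists (splice B0 Bn (S k) (S k) p q). split; [|split].
  - pose proof (splice_derivation (i := S k) (j := S k) D0 Dn (le_n _) ltac:(simpl; lia)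
                  Pp Hpoint Hback) as D.
    unfold shift_len in D. simpl in D. replace (S (k + (k + n - k))) with (S k + n) in D by lia.
    exact D.
  - split; [apply splice_goals_le | apply splice_step_lt].
  - intros HvC. apply Hv, (has_variant_pair_psub (g' := goals (splice B0 Bn (S k) (S k) p q))); auto.
    intros m. destruct (le_lt_dec m k) as [Hm | Hm].
    + exists (fun x => x), (fun x => x), []. split; [apply perm_on_id|].
      rewrite splice_goals_le, <- (proj1 Hag m Hm) by lia. symmetry. apply gsubst_Var.
    + exists p, q, W. split; auto.
      replace m with (S k + (m - S k)) by lia. apply (splice_goals_shift q Hpoint).
Qed.

(* [A] is a node of the (finitely branching) tree of derivation prefixes
   below which variant-free derivations of every depth exist. *)
Definition extendable (k : nat) (A : trace) : Prop :=
  forall n, exists B, derivation (Some (k + n)) B /\ agree k A B /\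
    ~ has_variant_pair (goals B) (k + n).

Lemma extendable_derivation k A : extendable k A -> derivation (Some k) A.
Proof.
  intros Hext. destruct (Hext 0) as [B [D [Hag _]]]. rewrite Nat.add_0_r in D.
  exact (derivation_agree D (agree_sym Hag)).
Qed.

(* König's lemma step: a step [k] is determined up to renaming by the selected
   clause and atom index, and there are finitely many of those. *)
Lemma extendable_step k A : extendable k A -> exists B, agree k A B /\ extendable (S k) B.
Proof.
  intros Hext.
  set (Q := fun (l : clause Fsym Psym * nat) n => exists B,
    derivation (Some (S k + n)) B /\ agree k A B /\ ~ has_variant_pair (goals B) (S k + n) /\
    clauses B k = fst l /\
    step_at P (goals B k) (clauses B k) (renamings B k) (mgus B k) (goals B (S k)) (snd l)).
  destruct (@monotone_pigeonhole _ (list_prod P (seq 0 (length (goals A k)))) Q)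
    as [l [_ Hl]].
  - intros l n n' Hn [B [D [Hag [Hv St]]]]. exists B. split; [|split; [|split]]; auto.
    + apply (derivation_truncate D). simpl. lia.
    + intros H. apply Hv. apply (has_variant_pair_mono (m := S k + n')); auto. lia.
  - intros n. destruct (Hext (S n)) as [B [D [Hag Hv]]]. rewrite <- plus_n_Sm in D, Hv.
    destruct (derivation_step D (j := k) ltac:(simpl; lia)) as [idx St].
    exists (clauses B k, idx). split.
    + apply in_prod; [apply St|]. apply in_seq. rewrite <- (proj1 Hag k (le_n k)).
      pose proof (step_at_length St). lia.
    + exists B. auto.
  - destruct (Hl 0) as [B0 [D0 [Hag0 [_ [Ec0 St0]]]]]. rewrite Nat.add_0_r in D0.
    exists B0. split; auto. intros n.
    destruct (Hl n) as [Bn [Dn [Hagn [Hvn [Ecn Stn]]]]].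
    rewrite <- Ec0 in Ecn.
    apply (agree_resplice D0 Dn (agree_trans (agree_sym Hag0) Hagn) Ecn St0 Stn Hvn).
Qed.

End Variants.

Section Koenig.
Variables Fsym Psym : Type.
Notation trace := (trace Fsym Psym).
Variable P : program Fsym Psym.
Variable G0 : goal Fsym Psym.
Notation derivation := (derivation P G0).
Notation extendable := (extendable P G0).

Hypothesis unbounded : forall d, exists len t, derivation len t /\ goal_in len d /\
  ~ has_variant_pair (goals t) d.

Lemma extendable_start : exists t : trace, extendable 0 t.
Proof.
  destruct (unbounded 0) as [len0 [t0 [D0 _]]]. exists t0. intros n.
  destruct (unbounded n) as [len [t [D [Hn Hv]]]]. exists t.
  split; [apply (derivation_truncate D Hn) | split; auto].
  split; intros m Hm; [|lia]. replace m with 0 by lia.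
  rewrite (derivation_start D), (derivation_start D0). reflexivity.
Qed.

Lemma trace_inhabited : inhabited trace.
Proof. destruct extendable_start as [t _]. exact (inhabits t). Qed.

Fixpoint chain (k : nat) : trace :=
  match k with
  | 0 => epsilon trace_inhabited (extendable 0)
  | S k' => epsilon trace_inhabited (fun B => agree k' (chain k') B /\ extendable k B)
  end.

Lemma chain_extendable k : extendable k (chain k).
Proof.
  induction k as [|k IH].
  - exact (epsilon_spec _ _ extendable_start).
  - exact (proj2 (epsilon_spec _ _ (extendable_step IH))).
Qed.

Lemma chain_agree_succ k : agree k (chain k) (chain (S k)).
Proof. exact (proj1 (epsilon_spec _ _ (extendable_step (chain_extendable k)))). Qed.

Lemma chain_agree k m : agree k (chain k) (chain (k + m)).
Proof.
  induction m as [|m IH].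
  - rewrite Nat.add_0_r. split; auto.
  - rewrite Nat.add_succ_r. apply (agree_trans IH), (agree_le (k := k + m)); [lia|].
    apply chain_agree_succ.
Qed.

Definition limit : trace :=
  Trace (fun n => goals (chain n) n) (fun n => clauses (chain (S n)) n)
        (fun n => renamings (chain (S n)) n) (fun n => mgus (chain (S n)) n).

Lemma limit_agree k : agree k (chain k) limit.
Proof.
  split; intros n Hn; simpl.
  - replace k with (n + (k - n)) by lia. symmetry. apply (chain_agree n (k - n)). lia.
  - replace k with (S n + (k - S n)) by lia.
    destruct (proj2 (chain_agree (S n) (k - S n)) n ltac:(lia)) as [? [? ?]].
    repeat split; auto.
Qed.

Lemma limit_derivation : derivation None limit.
Proof.
  apply derivation_None_intro. intros k.
  exact (derivation_agree (extendable_derivation (chain_extendable k)) (limit_agree k)).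
Qed.

Lemma limit_has_no_variant_pair m : ~ has_variant_pair (goals limit) m.
Proof.
  intros [i [j [tau [Hij [_ [R E]]]]]].
  destruct (chain_extendable j 0) as [B [_ [Hag Hv]]]. apply Hv.
  exists i, j, tau. rewrite Nat.add_0_r. repeat split; auto.
  pose proof (limit_agree j) as [Hl _]. rewrite !(proj1 Hag), <- !Hl by lia. exact E.
Qed.

End Koenig.

Lemma variant_pair_depth Fsym Psym (P : program Fsym Psym) (G0 : goal Fsym Psym) :
  (forall t, derivation P G0 None t -> exists m, has_variant_pair (goals t) m) ->
  exists d, forall len t, derivation P G0 len t -> goal_in len d ->
    has_variant_pair (goals t) d.
Proof.
  intros Hinf. apply NNPP. intros Hnot.
  assert (unbounded : forall d, exists len t, derivation P G0 len t /\ goal_in len d /\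
            ~ has_variant_pair (goals t) d).
  { intros d. apply NNPP. intros Hd. apply Hnot. exists d. intros len t D Hlen.
    apply NNPP. intros Hv. apply Hd. exists len, t. auto. }
  destruct (Hinf _ (limit_derivation unbounded)) as [m Hm].
  exact (limit_has_no_variant_pair Hm).
Qed.

Lemma resolvent_length_bound Fsym Psym (P : program Fsym Psym) (G0 : goal Fsym Psym) d :
  (forall len t, derivation P G0 len t -> goal_in len d -> has_variant_pair (goals t) d) ->
  forall k len t, derivation P G0 len t -> goal_in len k ->
    length (goals t k) <= length G0 + d * max_body P.
Proof.
  intros Hd k. induction k as [k IH] using (well_founded_induction lt_wf).
  intros len t D Hk. destruct (le_lt_dec k d) as [Hkd | Hkd].
  - pose proof (derivation_length D Hk). pose proof (Nat.mul_le_mono_r k d (max_body P) Hkd). lia.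
  - destruct (Hd len t D (goal_in_le (Nat.lt_le_incl _ _ Hkd) Hk))
      as [i [j [tau [Hij [Hjd [R E]]]]]].
    destruct (derivation_shorten (k := k) D Hij ltac:(lia) Hk R E) as [len' [t' [D' [Hk' <-]]]].
    apply (IH (k - (j - i)) ltac:(lia) len' t' D' Hk').
Qed.

Theorem lemmaL1p2p1 (Fsym Psym : Type) (P : program Fsym Psym) (G : goal Fsym Psym) :
  (forall g c xi th,
     sld_derivation P G None g c xi th -> pruned_EVR_L None G g th) ->
  exists l : nat,
    forall len g c xi th,
      sld_derivation P G len g c xi th ->
      forall j, goal_in len j -> length (g j) <= l.
Proof.
  intros Hpruned.
  destruct (@variant_pair_depth _ _ P G) as [d Hd].
  { intros [g c xi th] D. destruct (Hpruned g c xi th D) as [i [j [tau [Hij [_ [R [_ E]]]]]]].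
    exists j, i, j, tau. auto. }
  exists (length G + d * max_body P). intros len g c xi th D j Hj.
  exact (resolvent_length_bound Hd (t := Trace g c xi th) D Hj).
Qed.
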